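(* Let $\varepsilon>0$, $\nu\in\mathcal{S}^1$, let $L\subset\mathbb{R}^2$ be a line orthogonal to $\nu$, and let $\alpha\in\{1,2,3\}$ satisfy $|\langle\hat e_\alpha,\nu^\perp\rangle|\le\tfrac12$. Then there exists a family of triangles $(T_z)_{z\in\mathbb{Z}}$ such that for every $z\in\mathbb{Z}$: $$T_z\in\mathcal{T}^+_\varepsilon(\mathbb{R}^2),\quad T_z\subset\Sigma^{\alpha,z}_\varepsilon,\quad T_z\cap L\ne\emptyset,\quad T_z\cap T_{z+1}\ne\emptyset .$$
   Context: Lattice: $\hat e_1=(1,0)$, $\hat e_2=\tfrac12(1,\sqrt3)$, $\hat e_3=\tfrac12(-1,\sqrt3)$, $\mathcal{L}=\{z_1\hat e_1+z_2\hat e_2\colon z\in\mathbb{Z}^2\}$, $\mathcal{L}^1=\{z_1(\hat e_1+\hat e_2)+z_2(\hat e_2+\hat e_3)\colon z\in\mathbb{Z}^2\}$, $\mathcal{L}^2=\mathcal{L}^1+\hat e_1$, $\mathcal{L}^3=\mathcal{L}^1+\hat e_2$. $\mathcal{T}(\mathbb{R}^2)$: closed triangles $\mathrm{conv}\{i,j,k\}$, $i,j,k\in\mathcal L$ pairwise at distance 1, labelled $i\in\mathcal{L}^1,j\in\mathcal{L}^2,k\in\mathcal{L}^3$. $\mathcal{T}^+(\mathbb{R}^2)$ is the subfamily of such triangles whose labelled vertices are positively (counterclockwise) oriented, i.e. $(j-i)\times(k-j)>0$ with $v\times w=v_1w_2-v_2w_1$ (the ''upward'' triangles); $\mathcal{T}^+_\varepsilon(\mathbb{R}^2)=\varepsilon\mathcal{T}^+(\mathbb{R}^2)$.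 For $w\in\mathbb{R}^2$, $w^\perp=(-w_2,w_1)$. Slices: $\Sigma^{\alpha,z}_\varepsilon=\{s\hat e_\alpha+t\hat e_\alpha^\perp\colon s\in\mathbb{R},\ t\in[\varepsilon\tfrac{\sqrt3}{2}z,\varepsilon\tfrac{\sqrt3}{2}(z+1)]\}$ for $z\in\mathbb{Z}$. *)

From Stdlib Require Import Reals Lra Lia ZArith.
Open Scope R_scope.

Definition pt := (R * R)%type.

Definition padd (v w : pt) : pt := (fst v + fst w, snd v + snd w).
Definition pscale (a : R) (v : pt) : pt := (a * fst v, a * snd v).
Definition dot (v w : pt) : R := fst v * fst w + snd v * snd w.
Definition cross (v w : pt) : R := fst v * snd w - snd v * fst w.
Definition psub (v w : pt) : pt := (fst v - fst w, snd v - snd w).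
Definition perp (w : pt) : pt := (- snd w, fst w).
Definition dist (v w : pt) : R := sqrt (dot (psub v w) (psub v w)).

Definition e1 : pt := (1, 0).
Definition e2 : pt := (/2, sqrt 3 / 2).
Definition e3 : pt := (- /2, sqrt 3 / 2).

(* \hat e_alpha for alpha in {1,2,3} (other indices are never used). *)
Definition ehat (alpha : nat) : pt :=
  match alpha with
  | 1%nat => e1
  | 2%nat => e2
  | _ => e3
  end.

Definition inL (p : pt) : Prop :=
  exists z1 z2 : Z, p = padd (pscale (IZR z1) e1) (pscale (IZR z2) e2).
Definition inL1 (p : pt) : Prop :=
  exists z1 z2 : Z,
    p = padd (pscale (IZR z1) (padd e1 e2)) (pscale (IZR z2) (padd e2 e3)).
Definition inL2 (p : pt) : Prop := exists q, inL1 q /\ p = padd q e1.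
Definition inL3 (p : pt) : Prop := exists q, inL1 q /\ p = padd q e2.

Definition conv3 (a b c : pt) (p : pt) : Prop :=
  exists l1 l2 l3 : R, 0 <= l1 /\ 0 <= l2 /\ 0 <= l3 /\ l1 + l2 + l3 = 1 /\
    p = padd (padd (pscale l1 a) (pscale l2 b)) (pscale l3 c).

Definition upward_triangle (T : pt -> Prop) : Prop :=
  exists i j k : pt,
    inL i /\ inL j /\ inL k /\
    inL1 i /\ inL2 j /\ inL3 k /\
    dist i j = 1 /\ dist j k = 1 /\ dist i k = 1 /\
    cross (psub j i) (psub k j) > 0 /\
    (forall p, T p <-> conv3 i j k p).

Definition upward_triangle_eps (eps : R) (T : pt -> Prop) : Prop :=
  exists T0 : pt -> Prop, upward_triangle T0 /\
    (forall p, T p <-> exists q, T0 q /\ p = pscale eps q).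

Definition slice (alpha : nat) (z : Z) (eps : R) (p : pt) : Prop :=
  exists s t : R,
    eps * (sqrt 3 / 2) * IZR z <= t <= eps * (sqrt 3 / 2) * (IZR z + 1) /\
    p = padd (pscale s (ehat alpha)) (pscale t (perp (ehat alpha))).

(* Work at unit scale and rescale by eps at the end.  Let u be the unit
   lattice vector among e1, e3, -e2 parallel to e_alpha and w = rot60 u.  The
   triangles conv{P, P + u, P + w} with P = m u + r w are upward, and for fixed
   r they tile the r-th strip along u.  Writing a = <u, nu>, the hypothesis
   |<e_alpha, nu^perp>| <= 1/2 forces k = <w, nu> / a into [0, 1]: going up one
   row moves the point where L meets the row's base line by -k u.  Choosing in
   row r the triangle whose base edge meets L (a floor), the index m therefore
   drops by 0 or 1 from row r to row r + 1, so the apex of the r-th triangle is a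
   base vertex of the next one. *)

From Pilot Require Import Defs.
From Stdlib Require Import Reals ZArith Lra Lia Psatz.
Open Scope R_scope.

Ltac pt_ring := unfold padd, pscale, psub, perp, e1, e2, e3; cbn [fst snd];
  repeat rewrite ?plus_IZR, ?minus_IZR, ?mult_IZR, ?opp_IZR; f_equal; field.

Lemma sqrt3_sqr : sqrt 3 * sqrt 3 = 3.
Proof. apply sqrt_sqrt; lra. Qed.

Lemma sqrt3_pos : 0 < sqrt 3.
Proof. apply sqrt_lt_R0; lra. Qed.

Lemma dot_padd v w x : dot (padd v w) x = dot v x + dot w x.
Proof. destruct v, w, x; unfold dot, padd; cbn [fst snd]; ring. Qed.

Lemma dot_pscale k v x : dot (pscale k v) x = k * dot v x.
Proof. destruct v, x; unfold dot, pscale; cbn [fst snd]; ring. Qed.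

Lemma conv3_rotate a b c p : conv3 a b c p <-> conv3 b c a p.
Proof.
  assert (Hrot : forall a b c, conv3 a b c p -> conv3 b c a p).
  { intros a' b' c' (l1 & l2 & l3 & H1 & H2 & H3 & Hs & ->).
    exists l2, l3, l1; repeat split; try lra.
    destruct a', b', c'; pt_ring. }
  split; [apply Hrot | intros H; apply Hrot, Hrot, H].
Qed.

Lemma upward_triangle_ext (T T' : pt -> Prop) :
  (forall p, T p <-> T' p) -> upward_triangle T -> upward_triangle T'.
Proof.
  intros HTT' (i & j & k & Hi & Hj & Hk & Hi1 & Hj2 & Hk3 & Hij & Hjk & Hik & Hor & HT).
  exists i, j, k; do 10 (split; [assumption |]).
  intros p; rewrite <- HTT'; apply HT.
Qed.

Definition lat (x y : Z) : pt := padd (pscale (IZR x) e1) (pscale (IZR y) e2).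

Definition lat_norm (a b : Z) : Z := (a * a + a * b + b * b)%Z.

Lemma psub_lat x y x' y' : psub (lat x' y') (lat x y) = lat (x' - x) (y' - y).
Proof. unfold lat; pt_ring. Qed.

Lemma dot_lat a b : dot (lat a b) (lat a b) = IZR (lat_norm a b).
Proof.
  unfold dot, lat, lat_norm, padd, pscale, e1, e2; cbn [fst snd].
  rewrite !plus_IZR, !mult_IZR; field_simplify; rewrite pow2_sqrt by lra; field.
Qed.

Lemma cross_lat a b c d :
  cross (lat a b) (lat c d) = sqrt 3 / 2 * IZR (a * d - b * c).
Proof.
  unfold cross, lat, padd, pscale, e1, e2; cbn [fst snd].
  rewrite minus_IZR, !mult_IZR; field.
Qed.

Lemma dist_lat_unit x y x' y' :
  lat_norm (x - x') (y - y') = 1%Z -> Defs.dist (lat x y) (lat x' y') = 1.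
Proof. intros Hn; unfold Defs.dist; rewrite psub_lat, dot_lat, Hn; apply sqrt_1. Qed.

Lemma inL_lat x y : inL (lat x y).
Proof. exists x, y; reflexivity. Qed.

Lemma inL1_lat x y : (3 | y - x)%Z -> inL1 (lat x y).
Proof.
  intros [k Hk]; exists (x + k)%Z, k.
  replace y with (x + 3 * k)%Z by lia; unfold lat; pt_ring.
Qed.

Lemma inL2_lat x y : (3 | y - x + 1)%Z -> inL2 (lat x y).
Proof.
  intros H; exists (lat (x - 1) y); split.
  - apply inL1_lat; replace (y - (x - 1))%Z with (y - x + 1)%Z by ring; exact H.
  - unfold lat; pt_ring.
Qed.

Lemma inL3_lat x y : (3 | y - x - 1)%Z -> inL3 (lat x y).
Proof.
  intros H; exists (lat x (y - 1)); split.
  - apply inL1_lat; replace (y - 1 - x)%Z with (y - x - 1)%Z by ring; exact H.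
  - unfold lat; pt_ring.
Qed.

(* The unit vectors of L congruent to e1 modulo L^1: e1, e3 and -e2. *)
Definition lat_frame (a b : Z) : Prop := (3 | b - a + 1)%Z /\ lat_norm a b = 1%Z.

(* (-b, a + b) are the coordinates of the rotation of (a, b) by 60 degrees. *)
Definition lat_triangle (x y a b : Z) : pt -> Prop :=
  conv3 (lat x y) (lat (x + a) (y + b)) (lat (x - b) (y + a + b)).

Lemma lat_frame_rotate a b : lat_frame a b -> lat_frame (- a - b) a.
Proof.
  intros [[k Hk] Hn]; split.
  - exists (k + a)%Z; lia.
  - rewrite <- Hn; unfold lat_norm; ring.
Qed.

Lemma lat_triangle_rotate x y a b p :
  lat_triangle x y a b p <-> lat_triangle (x + a) (y + b) (- a - b) a p.
Proof.
  unfold lat_triangle.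
  replace (x + a + (- a - b))%Z with (x - b)%Z by ring.
  replace (y + b + a)%Z with (y + a + b)%Z by ring.
  replace (x + a - a)%Z with x by ring.
  replace (y + b + (- a - b) + a)%Z with y by ring.
  apply conv3_rotate.
Qed.

Lemma upward_lat_triangle_L1 x y a b :
  (3 | y - x)%Z -> lat_frame a b -> upward_triangle (lat_triangle x y a b).
Proof.
  intros [k Hk] [[l Hl] Hn].
  exists (lat x y), (lat (x + a) (y + b)), (lat (x - b) (y + a + b)).
  repeat split; try apply inL_lat; try (intros H; exact H).
  - apply inL1_lat; exists k; exact Hk.
  - apply inL2_lat; exists (k + l)%Z; lia.
  - apply inL3_lat; exists (k + b - l)%Z; lia.
  - apply dist_lat_unit; rewrite <- Hn; unfold lat_norm; ring.
  - apply dist_lat_unit; rewrite <- Hn; unfold lat_norm; ring.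
  - apply dist_lat_unit; rewrite <- Hn; unfold lat_norm; ring.
  - rewrite !psub_lat, cross_lat.
    replace ((x + a - x) * (y + a + b - (y + b)) - (y + b - y) * (x - b - (x + a)))%Z
      with (lat_norm a b) by (unfold lat_norm; ring).
    rewrite Hn; pose proof sqrt3_pos; lra.
Qed.

Lemma Z_divide3_cases n : (3 | n)%Z \/ (3 | n - 1)%Z \/ (3 | n + 1)%Z.
Proof.
  pose proof (Z.div_mod n 3 ltac:(lia)) as Hdiv.
  pose proof (Z.mod_pos_bound n 3 ltac:(lia)) as Hmod.
  assert (n mod 3 = 0 \/ n mod 3 = 1 \/ n mod 3 = 2)%Z as [H0 | [H1 | H2]] by lia.
  - left; exists (n / 3)%Z; lia.
  - right; left; exists (n / 3)%Z; lia.
  - right; right; exists (n / 3 + 1)%Z; lia.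
Qed.

Lemma upward_lat_triangle_L3 x y a b :
  (3 | y - x - 1)%Z -> lat_frame a b -> upward_triangle (lat_triangle x y a b).
Proof.
  intros [k Hk] Hab.
  apply (upward_triangle_ext (lat_triangle (x + a) (y + b) (- a - b) a)).
  { intros p; symmetry; apply lat_triangle_rotate. }
  apply upward_lat_triangle_L1; [| apply lat_frame_rotate, Hab].
  destruct Hab as [[l Hl] _]; exists (k + l)%Z; lia.
Qed.

Lemma upward_lat_triangle x y a b :
  lat_frame a b -> upward_triangle (lat_triangle x y a b).
Proof.
  intros Hab.
  (* Rotating the vertices moves the first one by (a, b), changing y - x by
     b - a = -1 (mod 3); at most two rotations bring it into L^1. *)
  destruct (Z_divide3_cases (y - x)) as [H0 | [H1 | [k Hk]]].
  - apply upward_lat_triangle_L1; assumption.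
  - apply upward_lat_triangle_L3; assumption.
  - apply (upward_triangle_ext (lat_triangle (x + a) (y + b) (- a - b) a)).
    { intros p; symmetry; apply lat_triangle_rotate. }
    apply upward_lat_triangle_L3; [| apply lat_frame_rotate, Hab].
    destruct Hab as [[l Hl] _]; exists (k + l - 1)%Z; lia.
Qed.

Definition rot60 (v : pt) : pt := padd (pscale (/ 2) v) (pscale (sqrt 3 / 2) (perp v)).

Definition frame_pt (u : pt) (x y : R) : pt := padd (pscale x u) (pscale y (rot60 u)).

Definition frame_triangle (u : pt) (x y : R) : pt -> Prop :=
  conv3 (frame_pt u x y) (frame_pt u (x + 1) y) (frame_pt u x (y + 1)).

Lemma frame_pt_perp u x y :
  frame_pt u x y = padd (pscale (x + y / 2) u) (pscale (y * (sqrt 3 / 2)) (perp u)).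
Proof. destruct u; unfold frame_pt, rot60; pt_ring. Qed.

Lemma dot_frame_pt u x y nu :
  dot (frame_pt u x y) nu = x * dot u nu + y * dot (rot60 u) nu.
Proof. unfold frame_pt; rewrite dot_padd, !dot_pscale; reflexivity. Qed.

Lemma frame_triangle_mem u x y x' y' :
  x <= x' -> y <= y' -> (x' - x) + (y' - y) <= 1 -> frame_triangle u x y (frame_pt u x' y').
Proof.
  intros Hx Hy Hxy; exists (1 - (x' - x) - (y' - y)), (x' - x), (y' - y).
  repeat split; try lra.
  destruct u; unfold frame_pt, rot60; pt_ring.
Qed.

Lemma frame_triangle_inv u x y p :
  frame_triangle u x y p ->
  exists x' y', x <= x' /\ y <= y' /\ (x' - x) + (y' - y) <= 1 /\ p = frame_pt u x' y'.
Proof.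
  intros (l1 & l2 & l3 & H1 & H2 & H3 & Hs & ->).
  exists (x + l2), (y + l3); repeat split; try lra.
  replace l1 with (1 - l2 - l3) by lra; destruct u; unfold frame_pt, rot60; pt_ring.
Qed.

Lemma rot60_slope u nu :
  dot u u = 1 -> dot nu nu = 1 -> Rabs (dot u (perp nu)) <= / 2 ->
  dot u nu <> 0 /\ 0 <= dot (rot60 u) nu / dot u nu <= 1.
Proof.
  intros Hu Hnu Hperp.
  set (a := dot u nu); set (b := dot (perp u) nu).
  assert (Hpyth : a * a + b * b = dot u u * dot nu nu)
    by (unfold a, b; destruct u, nu; unfold dot, perp; cbn [fst snd]; ring).
  rewrite Hu, Hnu, Rmult_1_l in Hpyth.
  assert (Hb : b * b <= / 4).
  { replace (dot u (perp nu)) with (- b) in Hperp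
      by (destruct u, nu; unfold b, dot, perp; cbn [fst snd]; ring).
    rewrite Rabs_Ropp in Hperp.
    pose proof (Rle_abs b); pose proof (Rle_abs (- b)); rewrite Rabs_Ropp in *; nra. }
  assert (Hw : dot (rot60 u) nu = a / 2 + sqrt 3 / 2 * b).
  { unfold rot60; rewrite dot_padd, !dot_pscale; unfold a, b; field. }
  assert (Ha : a <> 0) by (intros H0; rewrite H0 in Hpyth; lra).
  pose proof sqrt3_sqr; pose proof sqrt3_pos.
  assert (Hsplit : 0 <= a * (a / 2 + sqrt 3 / 2 * b) /\ 0 <= a * (a / 2 - sqrt 3 / 2 * b)).
  { assert (0 <= (a / 2 + sqrt 3 / 2 * b) * (a / 2 - sqrt 3 / 2 * b)) by nra.
    nra. }
  split; [exact Ha |]; rewrite Hw.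
  assert (0 < a * a) by (apply Rsqr_pos_lt; exact Ha).
  replace ((a / 2 + sqrt 3 / 2 * b) / a) with (a * (a / 2 + sqrt 3 / 2 * b) / (a * a))
    by (field; exact Ha).
  split.
  - apply Rmult_le_pos; [lra | apply Rlt_le, Rinv_0_lt_compat; lra].
  - apply Rle_trans with (a * a / (a * a)); [| right; field; exact Ha].
    apply Rmult_le_compat_r; [apply Rlt_le, Rinv_0_lt_compat |]; lra.
Qed.

Lemma Int_part_sub_bounds x k :
  0 <= k <= 1 -> (Int_part (x - k) <= Int_part x <= Int_part (x - k) + 1)%Z.
Proof.
  intros Hk.
  destruct (base_Int_part x) as [Hx1 Hx2]; destruct (base_Int_part (x - k)) as [Hy1 Hy2].
  split.
  - apply Z.lt_succ_r, lt_IZR; rewrite succ_IZR; lra.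
  - apply Z.lt_succ_r, lt_IZR; rewrite succ_IZR, plus_IZR; lra.
Qed.

Definition strip (u : pt) (r : Z) (p : pt) : Prop :=
  exists s t, IZR r * (sqrt 3 / 2) <= t <= (IZR r + 1) * (sqrt 3 / 2) /\
    p = padd (pscale s u) (pscale t (perp u)).

Definition triangle_chain (u nu : pt) (c : R) (T : Z -> pt -> Prop) : Prop :=
  forall r : Z,
    upward_triangle (T r) /\
    (forall p, T r p -> strip u r p) /\
    (exists p, T r p /\ dot p nu = c) /\
    (exists p, T r p /\ T (r + 1)%Z p).

Lemma triangle_chain_of_frame u nu c :
  dot u u = 1 -> dot nu nu = 1 -> Rabs (dot u (perp nu)) <= / 2 ->
  (forall m n : Z, upward_triangle (frame_triangle u (IZR m) (IZR n))) ->
  exists T, triangle_chain u nu c T.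
Proof.
  intros Hu Hnu Hperp Hup.
  destruct (rot60_slope u nu Hu Hnu Hperp) as [Ha Hk].
  set (k := dot (rot60 u) nu / dot u nu) in Hk.
  set (s := fun r : Z => c / dot u nu - IZR r * k).
  (* [frame_pt u (s r) r] is where the line meets the base line of row r. *)
  set (m := fun r : Z => Int_part (s r)).
  exists (fun r => frame_triangle u (IZR (m r)) (IZR r)).
  pose proof sqrt3_pos.
  intros r; repeat split.
  - apply Hup.
  - intros p Hp.
    destruct (frame_triangle_inv _ _ _ _ Hp) as (x' & y' & Hx' & Hy' & Hxy' & ->).
    exists (x' + y' / 2), (y' * (sqrt 3 / 2)); split; [split; nra | apply frame_pt_perp].
  - exists (frame_pt u (s r) (IZR r)); split.
    + destruct (base_Int_part (s r)).
      apply frame_triangle_mem; fold (m r) in *; lra.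
    + rewrite dot_frame_pt; unfold s, k; field; exact Ha.
  - exists (frame_pt u (IZR (m r)) (IZR r + 1)); split.
    + apply frame_triangle_mem; lra.
    + assert (Hs : s (r + 1)%Z = s r - k) by (unfold s; rewrite plus_IZR; ring).
      pose proof (Int_part_sub_bounds (s r) k Hk) as Hm.
      rewrite <- Hs in Hm; fold (m r) (m (r + 1)%Z) in Hm.
      destruct Hm as [Hm1 Hm2]; apply IZR_le in Hm1, Hm2; rewrite plus_IZR in Hm2.
      rewrite plus_IZR; apply frame_triangle_mem; lra.
Qed.

Lemma rot60_lat a b : rot60 (lat a b) = lat (- b) (a + b).
Proof.
  unfold rot60, lat, padd, pscale, perp, e1, e2; cbn [fst snd].
  rewrite opp_IZR, plus_IZR.
  f_equal; field_simplify; rewrite ?pow2_sqrt by lra; field.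
Qed.

Lemma frame_pt_lat a b m n :
  frame_pt (lat a b) (IZR m) (IZR n) = lat (m * a - n * b) (m * b + n * (a + b)).
Proof. unfold frame_pt; rewrite rot60_lat; unfold lat; pt_ring. Qed.

Lemma frame_triangle_lat a b m n :
  frame_triangle (lat a b) (IZR m) (IZR n)
  = lat_triangle (m * a - n * b) (m * b + n * (a + b)) a b.
Proof.
  unfold frame_triangle, lat_triangle.
  rewrite <- (plus_IZR m 1), <- (plus_IZR n 1), !frame_pt_lat.
  f_equal; f_equal; ring.
Qed.

Lemma strip_opp u r p : strip (pscale (-1) u) (- r - 1) p -> strip u r p.
Proof.
  intros (s & t & Ht & ->); rewrite minus_IZR, opp_IZR in Ht.
  exists (- s), (- t); split; [lra | destruct u; pt_ring].
Qed.

Lemma triangle_chain_opp u nu c T :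
  triangle_chain (pscale (-1) u) nu c T -> triangle_chain u nu c (fun r => T (- r - 1)%Z).
Proof.
  intros HT r.
  destruct (HT (- r - 1)%Z) as (Hup & Hstrip & Hline & _).
  destruct (HT (- r - 2)%Z) as (_ & _ & _ & (p & Hp & Hp')).
  repeat split; [exact Hup | | exact Hline |].
  - intros q Hq; apply strip_opp, Hstrip, Hq.
  - exists p; split.
    + replace (- r - 1)%Z with (- r - 2 + 1)%Z by ring; exact Hp'.
    + replace (- (r + 1) - 1)%Z with (- r - 2)%Z by ring; exact Hp.
Qed.

Lemma triangle_chain_lat a b nu c :
  lat_frame a b -> dot nu nu = 1 -> Rabs (dot (lat a b) (perp nu)) <= / 2 ->
  exists T, triangle_chain (lat a b) nu c T.
Proof.
  intros Hab Hnu Hperp.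
  apply triangle_chain_of_frame; [| exact Hnu | exact Hperp |].
  - rewrite dot_lat, (proj2 Hab); reflexivity.
  - intros m n; rewrite frame_triangle_lat; apply upward_lat_triangle, Hab.
Qed.

Lemma triangle_chain_ehat alpha nu c :
  (1 <= alpha <= 3)%nat -> dot nu nu = 1 -> Rabs (dot (ehat alpha) (perp nu)) <= / 2 ->
  exists T, triangle_chain (ehat alpha) nu c T.
Proof.
  intros Halpha Hnu Hperp.
  destruct alpha as [| [| [| [|]]]]; try lia; cbn [ehat] in *.
  - replace e1 with (lat 1 0) in * by (unfold lat; pt_ring).
    apply triangle_chain_lat; [split; [exists 0%Z |]; reflexivity | exact Hnu | exact Hperp].
  - (* Upward triangles with a side parallel to e2 have their third vertex on
       the side of -e2^perp: use the frame -e2 and reverse the order of rows. *)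
    assert (He2 : pscale (-1) e2 = lat 0 (-1)) by (unfold lat; pt_ring).
    destruct (triangle_chain_lat 0 (-1) nu c) as [T HT];
      [split; [exists 0%Z |]; reflexivity | exact Hnu | |].
    + rewrite <- He2, dot_pscale.
      replace (-1 * dot e2 (perp nu)) with (- dot e2 (perp nu)) by ring.
      rewrite Rabs_Ropp; exact Hperp.
    + exists (fun r => T (- r - 1)%Z); apply triangle_chain_opp; rewrite He2; exact HT.
  - replace e3 with (lat (-1) 1) in * by (unfold lat; pt_ring).
    apply triangle_chain_lat; [split; [exists 1%Z |]; reflexivity | exact Hnu | exact Hperp].
Qed.

Lemma slice_pscale alpha z eps q :
  0 < eps -> strip (ehat alpha) z q -> slice alpha z eps (pscale eps q).
Proof.
  intros Heps (s & t & Ht & ->).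
  exists (eps * s), (eps * t); split; [split; nra | destruct (ehat alpha); pt_ring].
Qed.

Theorem lemma4p6 (eps : R) (nu : pt) (c : R) (alpha : nat) :
  0 < eps ->
  dot nu nu = 1 ->
  (1 <= alpha <= 3)%nat ->
  Rabs (dot (ehat alpha) (perp nu)) <= / 2 ->
  exists T : Z -> (pt -> Prop),
    forall z : Z,
      upward_triangle_eps eps (T z) /\
      (forall p, T z p -> slice alpha z eps p) /\
      (exists p, T z p /\ dot p nu = c) /\
      (exists p, T z p /\ T (z + 1)%Z p).
Proof.
  intros Heps Hnu Halpha Hperp.
  destruct (triangle_chain_ehat alpha nu (c / eps) Halpha Hnu Hperp) as [T HT].
  exists (fun z p => exists q, T z q /\ p = pscale eps q).
  intros z; destruct (HT z) as (Hup & Hstrip & (q & Hq & Hline) & (q' & Hq' & Hq'')).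
  repeat split.
  - exists (T z); split; [exact Hup | reflexivity].
  - intros p (q0 & Hq0 & ->); apply slice_pscale, Hstrip, Hq0; exact Heps.
  - exists (pscale eps q); split; [exists q; auto |].
    rewrite dot_pscale, Hline; field; lra.
  - exists (pscale eps q'); split; exists q'; auto.
Qed.
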